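(* For $n\geq 2$ let $k_n$ be the number of ordered pairs of words $(w,z)$ over the alphabet $\{A,B,C,D\}$ satisfying: (i) both $w$ and $z$ start with the letter $A$, and $|w|+|z|=n$; (ii) $w$ and $z$ contain the same number of letters $A$; (iii) neither $w$ nor $z$ contains a $CB$-factor (a letter $C$ immediately followed by a letter $B$); (iv) for all $i$, if the $i$th letter $A$ from the right in $w$ is immediately preceded by a $C$ and immediately followed by a $B$, then the $i$th segment of $z$ from the left contains a letter $B$; (v) for all $i$, if the $i$th letter $A$ from the right in $w$ is immediately preceded by a $C$ and immediately followed by two consecutive letters $B$, then the $i$th segment of $z$ from the left contains at least two letters $B$. Then there exists a constant $c$ such that $k_n\leq c\cdot 3.70672^n$ for all $n\geq 2$.
   Context: A segment of a word $v$ over $\{A,B,C,D\}$ is a factor (consecutive letters) that starts with a letter $A$ and ends immediately before the next letter $A$, or at the end of $v$. The $i$th segment from the left is the one starting at the $i$th letter $A$ from the left. The words $w$ and $z$ need not have the same length. *)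

From HB Require Import structures.
From mathcomp Require Import all_boot all_order all_algebra.
Set Implicit Arguments. Unset Strict Implicit. Unset Printing Implicit Defensive.

Inductive letter := A | B | C | D.

Definition letter_code (x : letter) : 'I_4 :=
  match x with A => inord 0 | B => inord 1 | C => inord 2 | D => inord 3 end.
Definition letter_decode (i : 'I_4) : letter :=
  match val i with 0 => A | 1 => B | 2 => C | _ => D end.
Lemma letter_codeK : cancel letter_code letter_decode.
Proof. by case; rewrite /letter_decode /= inordK. Qed.
HB.instance Definition _ := Equality.copy letter (can_type letter_codeK).
HB.instance Definition _ := Finite.copy letter (can_type letter_codeK).

Definition word := seq letter.

Definition posA (w : word) : seq nat := [seq p <- iota 0 (size w) | nth D w p == A].

(* position of the i-th (0-based) letter A from the right in w *)
Definition posA_right (w : word) (i : nat) : nat := nth 0 (rev (posA w)) i.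

(* the i-th (0-based) segment of z from the left: starts at the i-th A and
   ends right before the next A, or at the end of z *)
Definition segment (z : word) (i : nat) : word :=
  let s := nth 0 (posA z) i in
  let e := nth (size z) (posA z) i.+1 in
  drop s (take e z).

Definition no_CB (w : word) : bool :=
  ~~ [exists p : 'I_(size w), (nth D w p == C) && (nth D w p.+1 == B)].

Definition precC (w : word) (p : nat) : bool := (0 < p) && (nth D w p.-1 == C).

Definition good_pair (w z : word) : bool :=
  [&& head D w == A, head D z == A,
      count (pred1 A) w == count (pred1 A) z,
      no_CB w, no_CB z,
      [forall i : 'I_(count (pred1 A) w),
         let p := posA_right w i in
         (precC w p && (nth D w p.+1 == B)) ==> (0 < count (pred1 B) (segment z i))] &
      [forall i : 'I_(count (pred1 A) w),
         let p := posA_right w i in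
         (precC w p && (nth D w p.+1 == B) && (nth D w p.+2 == B))
           ==> (1 < count (pred1 B) (segment z i))]].

Definition k (n : nat) : nat :=
  \sum_(m < n.+1) #|[set p : m.-tuple letter * (n - m).-tuple letter
                     | good_pair (tval p.1) (tval p.2)]|.

From Stdlib Require Import NArith Lia.
From HB Require Import structures.
From mathcomp Require Import all_boot all_order all_algebra.
From mathcomp Require Import zify reals.
Set Implicit Arguments. Unset Strict Implicit. Unset Printing Implicit Defensive.

(* Write w = A v_1 ... A v_k and z = A s_1 ... A s_k with A-free blocks v_j, s_j.
   The i-th letter A of w from the right is the one before v_(k+1-i), while the
   i-th segment of z is A s_i.  In the interleaving A v_1 A s_k A v_2 A s_(k-1)
   ... A v_k A s_1 conditions (iv) and (v) therefore become local: they only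
   involve the last letter of the previous v-block, the first two letters of the
   current one and the number of letters B in the block that follows it.  The
   interleavings of good pairs are thus accepted by a finite automaton, and the
   interleaving is injective and length-preserving, so k_n is at most the number
   of accepted words of length n.  A positive weight h on the states with
   sum_a h(delta(q, a)) <= 3.70672 h(q) bounds that number by h(start) 3.70672^n. *)

Lemma card_set_sum (T : finType) (P : pred T) :
  #|[set x | P x]| = \sum_(x : T) (P x : nat).
Proof. by rewrite -sum1dep_card big_mkcond. Qed.

Lemma card_tuple_cons (T : finType) n (P : pred (seq T)) :
  #|[set t : n.+1.-tuple T | P t]| = \sum_(a : T) #|[set t : n.-tuple T | P (a :: t)]|.
Proof.
rewrite card_set_sum (reindex (fun x : T * n.-tuple T => [tuple of x.1 :: x.2])) /=.
  rewrite -(pair_big xpredT xpredT (fun a (t : n.-tuple T) => (P (a :: t) : nat))) /=.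
  by apply: eq_bigr => a _; rewrite card_set_sum.
exists (fun t : n.+1.-tuple T => (thead t, [tuple of behead t])) => [[a t] _|t _] /=.
  by congr pair; apply: val_inj.
by rewrite [RHS]tuple_eta.
Qed.

Lemma sum_card_fibres_le (T : finType) (X : pred T) (g : T -> nat) N :
  \sum_(m < N) #|[set x | X x && (g x == m)]| <= #|[set x | X x]|.
Proof.
rewrite card_set_sum (eq_bigr _ (fun m _ => card_set_sum _)) exchange_big /=.
apply: leq_sum => x _; case: (X x) => /=; last by rewrite big1.
case: (ltnP (g x) N) => [ltgN|geNg].
  rewrite (bigD1 (Ordinal ltgN)) //= eqxx big1 // => m neq_m.
  by apply/eqP; rewrite eqb0; apply: contra neq_m => /eqP eq_gm; apply/eqP/val_inj.
by rewrite big1 // => m _; rewrite gtn_eqF // (leq_trans (ltn_ord m)).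
Qed.

Section PartialAutomaton.

Variables (T : finType) (S : Type) (delta : S -> T -> option S).

Fixpoint run (q : S) (u : seq T) : option S :=
  if u is a :: u' then (if delta q a is Some q' then run q' u' else None) else Some q.

Definition accepts (q : S) (u : seq T) : bool := run q u.

Definition num_accepted n q := #|[set t : n.-tuple T | accepts q t]|.

Lemma run_cons q a q' u : delta q a = Some q' -> run q (a :: u) = run q' u.
Proof. by move=> /= ->. Qed.

Lemma run_cat q u v : run q (u ++ v) = if run q u is Some q' then run q' v else None.
Proof. by elim: u q => [|a u IHu] q //=; case: (delta q a). Qed.

Lemma num_accepted_S n q :
  num_accepted n.+1 q =
  \sum_(a : T) (if delta q a is Some q' then num_accepted n q' else 0).
Proof.
rewrite /num_accepted card_tuple_cons; apply: eq_bigr => a _.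
rewrite /accepts /=; case: (delta q a) => [q'|] //.
by apply: eq_card0 => t; rewrite inE.
Qed.

Variables (h : S -> nat) (d lambda : nat).

Definition oweight (o : option S) : nat := if o is Some q then h q else 0.

Hypothesis h_gt0 : forall q, 0 < h q.
Hypothesis h_contracts : forall q, d * \sum_(a : T) oweight (delta q a) <= lambda * h q.

Lemma num_accepted_le n q : num_accepted n q * d ^ n <= h q * lambda ^ n.
Proof.
elim: n q => [|n IHn] q.
  by rewrite !expn0 !muln1 (leq_trans (max_card _)) // card_tuple expn0; apply: h_gt0.
have IHo o : (if o is Some q' then num_accepted n q' else 0) * d ^ n <= oweight o * lambda ^ n.
  by case: o => [q'|] //; apply: IHn.
rewrite num_accepted_S !expnS mulnCA big_distrl /=.
apply: (@leq_trans ((d * \sum_(a : T) oweight (delta q a)) * lambda ^ n)).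
  by rewrite -mulnA leq_mul2l big_distrl leq_sum ?orbT // => a _; apply: IHo.
by rewrite (mulnCA (h q)) mulnA leq_mul2r h_contracts orbT.
Qed.

End PartialAutomaton.

Definition letter_eqb (x y : letter) : bool :=
  match x, y with A, A | B, B | C, C | D, D => true | _, _ => false end.

Lemma letter_eqE (x y : letter) : (x == y) = letter_eqb x y.
Proof. by case: x; case: y => /=; first [exact: eqxx | apply/negbTE/eqP]. Qed.

Definition A_free (c : word) : bool := A \notin c.

Lemma A_free_cons x c : A_free (x :: c) = (x != A) && A_free c.
Proof. by rewrite /A_free in_cons negb_or eq_sym. Qed.

Fixpoint joinA (cs : seq word) : word :=
  if cs is c :: cs' then A :: c ++ joinA cs' else [::].

Lemma joinA_cons c cs : joinA (c :: cs) = A :: c ++ joinA cs. Proof. by []. Qed.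

Lemma joinA_cat cs1 cs2 : joinA (cs1 ++ cs2) = joinA cs1 ++ joinA cs2.
Proof. by elim: cs1 => [|c cs1 IHcs] //=; rewrite IHcs catA. Qed.

Lemma joinA_rcons cs c : joinA (rcons cs c) = joinA cs ++ A :: c.
Proof. by rewrite -cats1 joinA_cat /= cats0. Qed.

Lemma joinA_nth cs j : j < size cs ->
  joinA cs = joinA (take j cs) ++ A :: nth [::] cs j ++ joinA (drop j.+1 cs).
Proof. by move=> ltj; rewrite -{1}(cat_take_drop j cs) (drop_nth [::] ltj) joinA_cat. Qed.

Lemma size_joinA_rev cs : size (joinA (rev cs)) = size (joinA cs).
Proof.
elim: cs => [|c cs IHcs] //.
by rewrite rev_cons joinA_rcons joinA_cons /= !size_cat IHcs addnS addnC.
Qed.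

Lemma count_A_joinA cs : all A_free cs -> count (pred1 A) (joinA cs) = size cs.
Proof.
elim: cs => [|c cs IHcs] //= /andP [Ac /IHcs]; rewrite count_cat => ->.
by move/count_memPn: Ac => ->; rewrite eqxx.
Qed.

Fixpoint splitA (u : word) : word * seq word :=
  if u is a :: u' then
    let (p, cs) := splitA u' in if a == A then ([::], p :: cs) else (a :: p, cs)
  else ([::], [::]).

Definition blocksA (u : word) : seq word := (splitA u).2.

Lemma splitAK u : (splitA u).1 ++ joinA (blocksA u) = u.
Proof.
rewrite /blocksA; elim: u => [|a u IHu] //=; case: (splitA u) IHu => p cs /= IHu.
by case: eqP => [->|_]; rewrite -IHu.
Qed.

Lemma splitA_A_free u : A_free (splitA u).1 && all A_free (blocksA u).
Proof.
rewrite /blocksA; elim: u => [|a u IHu] //=.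
case: (splitA u) IHu => p cs /= /andP [Ap Acs].
by case: eqP => [_|/eqP neqA] /=; rewrite ?A_free_cons ?neqA ?Ap ?Acs.
Qed.

Lemma splitA_cat_joinA cs p : all A_free cs -> A_free p -> splitA (p ++ joinA cs) = (p, cs).
Proof.
elim: cs p => [|c cs IHcs] p /=.
  by elim: p => [|x p IHp] //= _ /[!A_free_cons] /andP [/negbTE-> /IHp->].
case/andP=> Ac Acs; elim: p => [|x p IHp] /=.
  by have := IHcs c Acs Ac => /= ->; rewrite eqxx.
by rewrite A_free_cons => /andP [/negbTE-> /IHp->].
Qed.

Lemma blocksA_joinA cs : all A_free cs -> blocksA (joinA cs) = cs.
Proof. by move=> Acs; rewrite /blocksA (splitA_cat_joinA (p := [::])). Qed.

Lemma count_A_blocksA u : count (pred1 A) u = size (blocksA u).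
Proof.
have /andP [Ap Acs] := splitA_A_free u.
by rewrite -{1}(splitAK u) count_cat (count_memPn Ap) count_A_joinA.
Qed.

Lemma joinA_blocksA u : head D u == A -> joinA (blocksA u) = u.
Proof.
move=> headA; rewrite -[RHS]splitAK; suff -> : (splitA u).1 = [::] by [].
by case: u headA => [|a u] //= /eqP->; case: (splitA u) => p cs; rewrite eqxx.
Qed.

Fixpoint interleave (a b : seq word) : seq word :=
  if a is x :: a' then (if b is y :: b' then x :: y :: interleave a' b' else [::])
  else [::].

Fixpoint deinterleave (s : seq word) : seq word * seq word :=
  match s with
  | x :: y :: s' => (x :: (deinterleave s').1, y :: (deinterleave s').2)
  | [:: x] => ([:: x], [::])
  | [::] => ([::], [::])
  end.

Lemma interleaveK a b : size a = size b -> deinterleave (interleave a b) = (a, b).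
Proof. by elim: a b => [|x a IHa] [|y b] //= [/IHa ->]. Qed.

Lemma all_interleave (P : pred word) a b : all P a -> all P b -> all P (interleave a b).
Proof.
by elim: a b => [|x a IHa] [|y b] //= /andP [-> Pa] /andP [-> Pb]; rewrite IHa.
Qed.

Lemma size_joinA_interleave a b : size a = size b ->
  size (joinA (interleave a b)) = size (joinA a) + size (joinA b).
Proof.
elim: a b => [|x a IHa] [|y b] //= [/IHa eq_size].
rewrite !size_cat /= size_cat eq_size; lia.
Qed.

Definition encode (w z : word) : word := joinA (interleave (blocksA w) (rev (blocksA z))).

Definition decode (u : word) : word * word :=
  let p := deinterleave (blocksA u) in (joinA p.1, joinA (rev p.2)).

Section Encoding.

Variables w z : word.
Hypotheses (headA_w : head D w == A) (headA_z : head D z == A).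
Hypothesis count_A_wz : count (pred1 A) w = count (pred1 A) z.

Let size_blocks : size (blocksA w) = size (rev (blocksA z)).
Proof. by rewrite size_rev -!count_A_blocksA. Qed.

Lemma decode_encode : decode (encode w z) = (w, z).
Proof.
have /andP [_ Aw] := splitA_A_free w; have /andP [_ Az] := splitA_A_free z.
rewrite /decode /encode blocksA_joinA ?all_interleave ?all_rev //= interleaveK //=.
by rewrite revK !joinA_blocksA.
Qed.

Lemma size_encode : size (encode w z) = size w + size z.
Proof. by rewrite size_joinA_interleave // size_joinA_rev !joinA_blocksA. Qed.

End Encoding.

Lemma size_posA u : size (posA u) = count (pred1 A) u.
Proof.
by rewrite /posA size_filter -[in RHS](mkseq_nth D u) /mkseq count_map.
Qed.

Lemma posA_cat u v : posA (u ++ v) = posA u ++ map (addn (size u)) (posA v).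
Proof.
rewrite /posA size_cat iotaD filter_cat add0n; congr (_ ++ _).
  by apply: eq_in_filter => p; rewrite mem_iota add0n => /andP [_ ltpu]; rewrite nth_cat ltpu.
rewrite -{1}(addn0 (size u)) iotaDl filter_map; congr map.
by apply: eq_filter => p /=; rewrite nth_cat ltnNge leq_addr addKn.
Qed.

Lemma posA_A_free v : A_free v -> posA v = [::].
Proof. by move=> Av; apply/eqP; rewrite -size_eq0 size_posA (count_memPn Av). Qed.

Lemma posA_joinA_cons c cs : A_free c ->
  posA (joinA (c :: cs)) = 0 :: map (addn (size c).+1) (posA (joinA cs)).
Proof.
move=> Ac; have posA1 : posA [:: A] = [:: 0] by rewrite /posA /= letter_eqE.
rewrite joinA_cons -cat1s !posA_cat (posA_A_free Ac) posA1 /= -map_comp.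
by congr (_ :: _); apply: eq_map => x /=; rewrite add1n addSn.
Qed.

Lemma nth_posA_joinA cs j : all A_free cs -> j < size cs ->
  nth 0 (posA (joinA cs)) j = size (joinA (take j cs)).
Proof.
elim: cs j => [|c cs IHcs] // [|j] /andP [Ac Acs] ltj; first by rewrite posA_joinA_cons.
rewrite posA_joinA_cons //= (nth_map 0) ?size_posA ?count_A_joinA // IHcs //.
by rewrite size_cat.
Qed.

Lemma posA_right_joinA cs i : all A_free cs -> i < size cs ->
  posA_right (joinA cs) i = size (joinA (take (size cs - i.+1) cs)).
Proof.
move=> Acs lti; rewrite /posA_right nth_rev size_posA count_A_joinA //.
by rewrite nth_posA_joinA //; lia.
Qed.

Lemma segment_joinA cs i : all A_free cs -> i < size cs ->
  segment (joinA cs) i = A :: nth [::] cs i.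
Proof.
move=> Acs lti; rewrite /segment nth_posA_joinA //.
have -> : nth (size (joinA cs)) (posA (joinA cs)) i.+1 = size (joinA (take i.+1 cs)).
  case: (ltnP i.+1 (size cs)) => [ltSi|leSi].
    by rewrite (set_nth_default 0) ?size_posA ?count_A_joinA // nth_posA_joinA.
  by rewrite nth_default ?size_posA ?count_A_joinA // take_oversize.
rewrite (take_nth [::] lti) joinA_rcons (joinA_nth lti) -cat_cons catA.
by rewrite take_size_cat // drop_size_cat.
Qed.

Fixpoint CB_free (s : word) : bool :=
  if s is x :: ((y :: _) as t) then ~~ ((x == C) && (y == B)) && CB_free t else true.

Lemma CB_free_A_cons s : CB_free (A :: s) = CB_free s.
Proof. by case: s => [|y s] //=; rewrite letter_eqE. Qed.

Lemma CB_free_cat_A c t : CB_free (c ++ A :: t) = CB_free c && CB_free (A :: t).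
Proof.
elim: c => [|x c IHc] //; case: c IHc => [|y c] IHc.
  by rewrite /= !letter_eqE /= andbF.
have CB_free2 s : CB_free [:: x, y & s] = ~~ ((x == C) && (y == B)) && CB_free (y :: s) by [].
by rewrite [_ ++ _]/= CB_free2 -cat_cons IHc CB_free2 andbA.
Qed.

Lemma CB_free_joinA cs : CB_free (joinA cs) -> all CB_free cs.
Proof.
elim: cs => [|c cs IHcs] //; rewrite joinA_cons CB_free_A_cons /=.
case: cs IHcs => [|c' cs] IHcs; first by rewrite cats0 => ->.
by rewrite joinA_cons CB_free_cat_A -joinA_cons => /andP [-> /IHcs].
Qed.

Lemma no_CB_CB_free w : no_CB w -> CB_free w.
Proof.
apply: contraLR; rewrite /no_CB negbK => not_CB_free; apply/existsP.
suff [p ltpw CBp] : exists2 p, p < size w & (nth D w p == C) && (nth D w p.+1 == B).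
  by exists (Ordinal ltpw).
elim: w not_CB_free => [|x [|y w] IHw] //=.
rewrite negb_and negbK => /orP [CBx|/IHw [p ltpw CBp]]; first by exists 0.
by exists p.+1.
Qed.

Lemma big_letter (F : letter -> nat) : \sum_(a : letter) F a = F A + F B + F C + F D.
Proof.
rewrite (reindex letter_decode) /=.
  by rewrite !big_ord_recl big_ord0 /= addn0 !addnA.
exists letter_code => [i _|x _]; last by rewrite letter_codeK.
by apply: val_inj; case: i => [[|[|[|[|?]]]] ?] //=; rewrite inordK.
Qed.

Inductive debt := debt0 | debt1 | debt2.

Definition nat_of_debt (n : debt) : nat :=
  match n with debt0 => 0 | debt1 => 1 | debt2 => 2 end.

Definition debt_pred (n : debt) : debt := if n is debt2 then debt1 else debt0.

Lemma iter_debt_pred k n : nat_of_debt n <= k -> iter k debt_pred n = debt0.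
Proof. by elim: k n => [|k IHk] [] // le_nk; rewrite iterSr IHk. Qed.

(* States while reading A v_1 A s_k A v_2 A s_(k-1) ...: in [AfterA p] and
   [AfterAB p] we are at the start of a block v_j whose letter A is preceded by C
   in w iff [p]; in [InW n c] we are inside v_j; in [InZ n c p] we are inside the
   z-block following v_j, and [p] records whether v_j ends with C.  The debt [n]
   is the number of letters B that this z-block still has to contain, and [c]
   records whether the last letter read is C. *)
Inductive state :=
  | Start
  | AfterA of bool
  | AfterAB of bool
  | InW of debt & bool
  | InZ of debt & bool & bool.

Definition step (q : state) (a : letter) : option state :=
  match q with
  | Start => if a is A then Some (AfterA false) else None
  | AfterA p =>
      match a with
      | A => Some (InZ debt0 false false)
      | B => Some (AfterAB p)
      | C => Some (InW debt0 true)
      | D => Some (InW debt0 false)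
      end
  | AfterAB p =>
      match a with
      | A => Some (InZ (if p then debt1 else debt0) false false)
      | B => Some (InW (if p then debt2 else debt0) false)
      | C => Some (InW (if p then debt1 else debt0) true)
      | D => Some (InW (if p then debt1 else debt0) false)
      end
  | InW n c =>
      match a with
      | A => Some (InZ n false c)
      | B => if c then None else Some (InW n false)
      | C => Some (InW n true)
      | D => Some (InW n false)
      end
  | InZ n c p =>
      match a with
      | A => if n is debt0 then Some (AfterA p) else None
      | B => if c then None else Some (InZ (debt_pred n) false p)
      | C => Some (InZ n true p)
      | D => Some (InZ n false p)
      end
  end.

(* A Perron eigenvector of the transition matrix of [step], whose spectral radius
   is 3.7067193..., scaled and rounded up; the slack absorbs the rounding. *)
Definition weightN (q : state) : N :=
  match q with
  | Start => 1655222
  | AfterA false => 6135439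
  | AfterA true => 5079094
  | AfterAB false => 6135439
  | AfterAB true => 2219863
  | InW debt0 false => 6135439
  | InW debt0 true => 4188379
  | InW debt1 false => 2625051
  | InW debt1 true => 1792000
  | InW debt2 false => 1123132
  | InW debt2 true => 766710
  | InZ debt0 false false => 6283093
  | InZ debt0 false true => 5201327
  | InZ debt0 true false => 4588039
  | InZ debt0 true true => 3798112
  | InZ debt1 false false => 2688222
  | InZ debt1 false true => 2225389
  | InZ debt1 true false => 993168
  | InZ debt1 true true => 822173
  | InZ debt2 false false => 1150158
  | InZ debt2 false true => 952134
  | InZ debt2 true false => 424928
  | InZ debt2 true true => 351769
  end%num.

Definition oweightN (o : option state) : N := if o is Some q then weightN q else 0%num.

Lemma weightN_contracts q :
  (100000 * (oweightN (step q A) + oweightN (step q B) + oweightN (step q C)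
             + oweightN (step q D)) <= 370672 * weightN q)%num.
Proof. by case: q => [|[]|[]|[] []|[] [] []]; vm_compute; discriminate. Qed.

Definition weight (q : state) : nat := N.to_nat (weightN q).

Lemma weight_gt0 q : 0 < weight q.
Proof.
have weightN_gt0 : (0 < weightN q)%num by case: q => [|[]|[]|[] []|[] [] []]; vm_compute.
by apply/ltP; rewrite /weight; lia.
Qed.

Lemma weight_contracts q :
  100000 * \sum_(a : letter) oweight weight (step q a) <= 370672 * weight q.
Proof.
have oweightE o : oweight weight o = N.to_nat (oweightN o) by case: o.
have E1 : N.to_nat 100000 = 100000 by apply/eqP; vm_compute.
have E2 : N.to_nat 370672 = 370672 by apply/eqP; vm_compute.
have contracts := @weightN_contracts q.
by rewrite big_letter !oweightE -E1 -E2 /weight; apply/leP; lia.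
Qed.

Definition isC (x : letter) : bool := if x is C then true else false.

Lemma isCE x : isC x = (x == C). Proof. by case: x; rewrite letter_eqE. Qed.

Definition B_debt (pc : bool) (v : word) : debt :=
  if pc && (nth D v 0 == B) then (if nth D v 1 == B then debt2 else debt1) else debt0.

Lemma step_InW n x y : y != A -> ~~ ((x == C) && (y == B)) ->
  step (InW n (isC x)) y = Some (InW n (isC y)).
Proof. by rewrite !letter_eqE; case: y => //; case: x. Qed.

Lemma step_InZ n p x y : y != A -> ~~ ((x == C) && (y == B)) ->
  step (InZ n (isC x) p) y = Some (InZ (if y == B then debt_pred n else n) (isC y) p).
Proof. by rewrite !letter_eqE; case: y => //; case: x. Qed.

Lemma run_InW n x u : A_free u -> CB_free (x :: u) ->
  run step (InW n (isC x)) (rcons u A) = Some (InZ n false (isC (last x u))).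
Proof.
elim: u x => [|y u IHu] x //; rewrite A_free_cons => /andP [neq_yA Au] /andP [not_CB CBu].
by rewrite rcons_cons (run_cons _ (step_InW n neq_yA not_CB)) IHu.
Qed.

Lemma run_InZ n p x u : A_free u -> CB_free (x :: u) ->
  run step (InZ n (isC x) p) u
  = Some (InZ (iter (count (pred1 B) u) debt_pred n) (isC (last x u)) p).
Proof.
elim: u x n => [|y u IHu] x n //; rewrite A_free_cons => /andP [neq_yA Au] /andP [not_CB CBu].
rewrite (run_cons _ (step_InZ n p neq_yA not_CB)) IHu // [count _ (_ :: _)]/=.
by case: eqP => [->|_]; rewrite ?add1n ?iterSr.
Qed.

Lemma run_AfterA pc v : A_free v -> CB_free v ->
  run step (AfterA pc) (rcons v A) = Some (InZ (B_debt pc v) false (isC (last A v))).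
Proof.
case: v => [|y u]; first by rewrite /B_debt /= letter_eqE andbF.
rewrite A_free_cons => /andP [+ Au]; rewrite letter_eqE; case: y => // _ CBu.
- case: u Au CBu => [|y u]; first by rewrite /B_debt /= !letter_eqE; case: pc.
  rewrite A_free_cons => /andP [neq_yA Au] /andP [_ CBu].
  have step_y : step (AfterAB pc) y = Some (InW (B_debt pc [:: B, y & u]) (isC y)).
    by move: neq_yA {CBu}; rewrite /B_debt /= !letter_eqE; case: y => //; case: pc.
  have step_B : step (AfterA pc) B = Some (AfterAB pc) by [].
  by rewrite !rcons_cons (run_cons _ step_B) (run_cons _ step_y) run_InW.
- by rewrite /= (run_InW debt0 (x := C)) // /B_debt /= letter_eqE andbF.
- by rewrite /= (run_InW debt0 (x := D)) // /B_debt /= letter_eqE andbF.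
Qed.

Lemma run_block_pair q pc v s :
  step q A = Some (AfterA pc) -> A_free v -> A_free s -> CB_free v -> CB_free s ->
  nat_of_debt (B_debt pc v) <= count (pred1 B) s ->
  run step q (A :: v ++ A :: s) = Some (InZ debt0 (isC (last A s)) (isC (last A v))).
Proof.
move=> stepA Av As CBv CBs enough_B.
rewrite /= stepA -cat_rcons run_cat run_AfterA //.
by rewrite (run_InZ _ _ (x := A)) ?CB_free_A_cons ?iter_debt_pred.
Qed.

Lemma accepts_joinA_interleave vs ss x q :
  size ss = size vs -> all A_free vs -> all A_free ss -> all CB_free vs -> all CB_free ss ->
  (forall j, j < size vs ->
     nat_of_debt (B_debt (isC (last x (joinA (take j vs)))) (nth [::] vs j))
     <= count (pred1 B) (nth [::] ss j)) ->
  step q A = Some (AfterA (isC x)) -> accepts step q (joinA (interleave vs ss)).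
Proof.
elim: vs ss x q => [|v vs IHvs] [|s ss] // x q [eq_size] /andP [Av Avs] /andP [As Ass]
  /andP [CBv CBvs] /andP [CBs CBss] enough_B stepA.
have run_pair := run_block_pair stepA Av As CBv CBs (enough_B 0 isT).
have -> : joinA (interleave (v :: vs) (s :: ss))
          = (A :: v ++ A :: s) ++ joinA (interleave vs ss) by rewrite /= -catA.
rewrite /accepts run_cat run_pair.
apply: (IHvs ss (last A v)) => // j ltj.
by have := enough_B j.+1 ltj; rewrite /= last_cat.
Qed.

Lemma precC_cat_A X t : precC (X ++ A :: t) (size X) = isC (last A X).
Proof.
case/lastP: X => [|X x] //.
by rewrite /precC size_rcons /= nth_cat size_rcons ltnSn nth_rcons ltnn eqxx last_rcons isCE.
Qed.

Lemma nth_cat_cons_addn (x0 y : letter) X t i :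
  nth x0 (X ++ y :: t) (size X + i.+1) = nth x0 t i.
Proof. by rewrite nth_cat ltnNge leq_addr addKn. Qed.

Lemma B_debt_cat_joinA pc v cs : B_debt pc (v ++ joinA cs) = B_debt pc v.
Proof.
by case: v => [|x [|y v]]; case: cs => [|c cs]; rewrite /B_debt /= ?letter_eqE ?andbF.
Qed.

Lemma B_debt_le pc t k :
  (pc && (nth D t 0 == B)) ==> (0 < k) ->
  (pc && (nth D t 0 == B) && (nth D t 1 == B)) ==> (1 < k) ->
  nat_of_debt (B_debt pc t) <= k.
Proof. by rewrite /B_debt; case: pc; case: (nth D t 0 == B); case: (nth D t 1 == B). Qed.

Lemma count_B_A_cons s : count (pred1 B) (A :: s) = count (pred1 B) s.
Proof. by rewrite /= letter_eqE. Qed.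

(* Conditions (iv) and (v) for the j-th letter A of w from the left, which is the
   (size vs - j.+1)-th one from the right. *)
Lemma good_pair_B_debt vs ss j :
  all A_free vs -> all A_free ss -> size ss = size vs ->
  good_pair (joinA vs) (joinA ss) -> j < size vs ->
  nat_of_debt (B_debt (isC (last A (joinA (take j vs)))) (nth [::] vs j))
  <= count (pred1 B) (nth [::] (rev ss) j).
Proof.
move=> Avs Ass eq_size /and5P [_ _ _ _ /and3P [_ cond1 cond2]] ltj.
have lti : size vs - j.+1 < count (pred1 A) (joinA vs) by rewrite count_A_joinA //; lia.
have := forallP cond2 (Ordinal lti); have := forallP cond1 (Ordinal lti) => /=.
rewrite segment_joinA ?eq_size //; last by lia.
rewrite posA_right_joinA //; last by lia.
have -> : size vs - (size vs - j.+1).+1 = j by lia.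
rewrite nth_rev ?eq_size // (joinA_nth ltj).
set X := joinA (take j vs); set Y := joinA (drop j.+1 vs).
rewrite -[(size X).+2]addn2 -[(size X).+1]addn1 !nth_cat_cons_addn precC_cat_A.
rewrite count_B_A_cons => cond_B cond_BB.
by rewrite -(B_debt_cat_joinA _ _ (drop j.+1 vs)); apply: B_debt_le.
Qed.

Lemma good_pair_accepted w z : good_pair w z -> accepts step Start (encode w z).
Proof.
move=> good; have /and5P [headA_w headA_z /eqP count_A no_CB_w /andP [no_CB_z _]] := good.
have /andP [_ Aw] := splitA_A_free w; have /andP [_ Az] := splitA_A_free z.
have eq_size : size (rev (blocksA z)) = size (blocksA w) by rewrite size_rev -!count_A_blocksA.
apply: (accepts_joinA_interleave (x := A)) => //; rewrite ?all_rev //.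
- by apply: CB_free_joinA; rewrite joinA_blocksA //; apply: no_CB_CB_free.
- by apply: CB_free_joinA; rewrite joinA_blocksA //; apply: no_CB_CB_free.
move=> j ltj; apply: good_pair_B_debt; rewrite ?size_rev ?joinA_blocksA //.
by rewrite -size_rev.
Qed.

Lemma k_le_num_accepted n : k n <= num_accepted step n Start.
Proof.
pose accepted (u : n.-tuple letter) := accepts step Start u.
pose size_fst (u : n.-tuple letter) := size (decode u).1.
apply: leq_trans (sum_card_fibres_le accepted size_fst n.+1).
apply: leq_sum => m _; set good := (X in #|X| <= _).
have le_mn : m <= n by rewrite -ltnS.
pose enc (p : m.-tuple letter * (n - m).-tuple letter) : n.-tuple letter :=
  insubd (nseq_tuple n A) (encode p.1 p.2).
have encE p : p \in good -> [/\ val (enc p) = encode p.1 p.2, good_pair p.1 p.2 &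
                                decode (encode p.1 p.2) = (tval p.1, tval p.2)].
  rewrite inE => good_p; have /and5P [headA_w headA_z /eqP count_A _ _] := good_p.
  by rewrite val_insubd size_encode // !size_tuple subnKC // eqxx decode_encode.
rewrite -(card_in_imset (f := enc)).
  apply/subset_leq_card/subsetP => _ /imsetP [p good_p ->].
  have [enc_p good_pair_p dec_p] := encE p good_p.
  by rewrite inE /accepted /size_fst enc_p good_pair_accepted // dec_p size_tuple eqxx.
move=> [w1 z1] [w2 z2] /encE [enc1 _ dec1] /encE [enc2 _ dec2] /(congr1 val).
rewrite enc1 enc2 => /(congr1 decode).
by rewrite dec1 dec2 /= => -[/val_inj-> /val_inj->].
Qed.

Import Order.TTheory GRing.Theory Num.Theory.
Local Open Scope ring_scope.

Theorem corollary4p3 (R : realType) :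
  exists c : R, forall n : nat, (2 <= n)%N ->
    (k n)%:R <= c * (370672%:R / 100000%:R) ^+ n.
Proof.
exists (weight Start)%:R => n _.
have bound : (k n * 100000 ^ n <= weight Start * 370672 ^ n)%N.
  apply: leq_trans (num_accepted_le weight_gt0 weight_contracts n Start).
  by rewrite leq_mul2r k_le_num_accepted orbT.
have pos : 0 < (100000%:R : R) ^+ n by rewrite exprn_gt0 ?ltr0n.
rewrite expr_div_n mulrA (ler_pdivlMr _ _ pos).
rewrite -[X in _ * X <= _]natrX -[X in _ <= _ * X]natrX.
rewrite -[X in X <= _]natrM -[X in _ <= X]natrM ler_nat.
exact: bound.
Qed.
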